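(* Consider the stochastic-follower setting (defined in the context), and run the following algorithm with an arbitrary estimation procedure: at each round $t$ the leader holds, for every $(\mathbf{z},\mathbf{x})$, an estimated probability vector $\widehat{\mathbf{p}}_t(\mathbf{z},\mathbf{x})=[\widehat{p}_t(b_{f_t}(\mathbf{z},\mathbf{x})=a_f)]_{a_f\in\mathcal{A}_f}$ computed from $f_1,\ldots,f_{t-1}$; upon observing $\mathbf{z}_t$ it commits to $\mathbf{x}_t=\pi_t(\mathbf{z}_t)\in\arg\max_{\mathbf{x}\in\mathcal{E}_{\mathbf{z}_t}}\sum_{a_f\in\mathcal{A}_f}u(\mathbf{z}_t,\mathbf{x},a_f)\,\widehat{p}_t(b_{f_t}(\mathbf{z}_t,\mathbf{x})=a_f)$, then observes $f_t$ and updates its estimate. Let $\mathbf{p}(\mathbf{z},\mathbf{x})=[\Pr_{f\sim\mathcal{F}}(b_f(\mathbf{z},\mathbf{x})=a_f)]_{a_f\in\mathcal{A}_f}$, and let $\pi^{(\mathcal{E})}$ be a policy with $\pi^{(\mathcal{E})}(\mathbf{z})\in\mathcal{E}_{\mathbf{z}}$ for all $\mathbf{z}$ such that $\sum_{t=1}^T\mathbb{E}_{f_t\sim\mathcal{F}}[u(\mathbf{z}_t,\pi^*(\mathbf{z}_t),b_{f_t}(\mathbf{z}_t,\pi^*(\mathbf{z}_t)))-u(\mathbf{z}_t,\pi^{(\mathcal{E})}(\mathbf{z}_t),b_{f_t}(\mathbf{z}_t,\pi^{(\mathcal{E})}(\mathbf{z}_t)))]\le 1$. Then the expected contextual Stackelberg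 regret satisfies $$\mathbb{E}[R(T)]\le 1+2\sum_{t=1}^T\mathbb{E}_{f_1,\ldots,f_{t-1}}\Big[\mathrm{TV}\big(\mathbf{p}(\mathbf{z}_t,\pi^{(\mathcal{E})}(\mathbf{z}_t)),\widehat{\mathbf{p}}_t(\mathbf{z}_t,\pi^{(\mathcal{E})}(\mathbf{z}_t))\big)+\mathrm{TV}\big(\mathbf{p}(\mathbf{z}_t,\pi_t(\mathbf{z}_t)),\widehat{\mathbf{p}}_t(\mathbf{z}_t,\pi_t(\mathbf{z}_t))\big)\Big].$$
   Context: Game: finite leader actions $\mathcal{A}$, finite follower actions $\mathcal{A}_f$, contexts $\mathcal{Z}\subseteq\mathbb{R}^d$, follower types $\alpha^{(1)},\ldots,\alpha^{(K)}$ ($K\le T$) with known utilities $u_{\alpha^{(i)}}:\mathcal{Z}\times\mathcal{A}\times\mathcal{A}_f\to[0,1]$, known leader utility $u:\mathcal{Z}\times\mathcal{A}\times\mathcal{A}_f\to[0,1]$, mixed strategies $\mathbf{x}\in\Delta(\mathcal{A})$, $u(\mathbf{z},\mathbf{x},a_f)=\sum_{a_l}\mathbf{x}[a_l]u(\mathbf{z},a_l,a_f)$; best response $b_f(\mathbf{z},\mathbf{x})\in\arg\max_{a_f}\sum_{a_l}\mathbf{x}[a_l]u_f(\mathbf{z},a_l,a_f)$ with ties broken by a fixed known ordering. Best-response regions: $\mathcal{X}_{\mathbf{z}}(\sigma)=\{\mathbf{x}: b_{\alpha^{(i)}}(\mathbf{z},\mathbf{x})=\sigma(\alpha^{(i)})\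 \forall i\}$ for $\sigma:\{\alpha^{(1)},\ldots,\alpha^{(K)}\}\to\mathcal{A}_f$. $\mathcal{E}_{\mathbf{z}}$ is a set of $\delta$-approximate extreme points ($\delta\le1/T$): for every $\sigma$ with $\mathcal{X}_{\mathbf{z}}(\sigma)\ne\emptyset$ and every extreme point $\mathbf{x}$ of $\mathrm{cl}(\mathcal{X}_{\mathbf{z}}(\sigma))$, either $\mathbf{x}\in\mathcal{X}_{\mathbf{z}}(\sigma)$ and $\mathbf{x}\in\mathcal{E}_{\mathbf{z}}$, or some $\mathbf{x}'\in\mathcal{E}_{\mathbf{z}}\cap\mathcal{X}_{\mathbf{z}}(\sigma)$ has $\|\mathbf{x}'-\mathbf{x}\|_1\le\delta$. Stochastic-follower setting: $f_1,\ldots,f_T$ are drawn i.i.d. from an unknown distribution $\mathcal{F}$ over types; the contexts are chosen by a (possibly adaptive) adversary which, when choosing $\mathbf{z}_t$, knows $\mathcal{F}$, the algorithm and $f_1,\ldots,f_{t-1}$ but not $f_t$. The leader observes $f_t$ after round $t$. Expected contextual Stackelberg regret: $\mathbb{E}[R(T)]=\mathbb{E}_{f_1,\ldots,f_T\sim\mathcal{F}}\big[\sum_t u(\mathbf{z}_t,\pi^*(\mathbf{z}_t),b_{f_t}(\mathbf{z}_t,\pi^*(\mathbf{z}_t)))-u(\mathbf{z}_t,\mathbf{x}_t,b_{f_t}(\mathbf{z}_t,\mathbf{x}_t))\big]$, where $\pi^*$ is the optimal policy given knowledge of $\mathbf{z}_1,\ldots,\mathbf{z}_T$ and $\mathcal{F}$.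 $\mathrm{TV}(\mathbf{p},\mathbf{q})=\frac12\sum_a|\mathbf{p}[a]-\mathbf{q}[a]|$. *)

From HB Require Import structures.
From mathcomp Require Import all_boot all_order all_algebra.
Set Implicit Arguments. Unset Strict Implicit. Unset Printing Implicit Defensive.
Import Order.TTheory GRing.Theory Num.Theory.
Local Open Scope ring_scope.

Section StackelbergDefs.
Variables (R : realFieldType) (Z : Type) (A Af : finType).

Definition distrib (I : finType) (p : {ffun I -> R}) : Prop :=
  (forall i, 0 <= p i) /\ \sum_i p i = 1.

Definition mixed (x : {ffun A -> R}) : Prop := distrib x.

Definition mutil (u : Z -> A -> Af -> R) (z : Z) (x : {ffun A -> R}) (af : Af) : R :=
  \sum_(al : A) x al * u z al af.

Definition is_br (uf : Z -> A -> Af -> R) z x (af : Af) : bool :=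
  [forall b, mutil uf z x b <= mutil uf z x af].

(* best response with ties broken by the fixed known ordering given by the
   injective rank [rk] (smaller rank preferred); [a0] is only a witness that
   Af is nonempty and does not influence the value. *)
Definition br (rk : Af -> nat) (a0 : Af) (uf : Z -> A -> Af -> R) z x : Af :=
  let am := odflt a0 [pick a | is_br uf z x a] in
  [arg min_(a < am | is_br uf z x a) rk a].

Definition dist1 (x y : {ffun A -> R}) : R := \sum_a `|x a - y a|.

Definition closure (S : {ffun A -> R} -> Prop) (x : {ffun A -> R}) : Prop :=
  forall e : R, 0 < e -> exists y, S y /\ dist1 x y < e.

Definition extreme_pt (C : {ffun A -> R} -> Prop) (x : {ffun A -> R}) : Prop :=
  C x /\ forall y w (l : R), C y -> C w -> 0 < l < 1 ->
    (forall a, x a = l * y a + (1 - l) * w a) -> y = x /\ w = x.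

Definition brregion (K : nat) (rk : Af -> nat) (a0 : Af)
  (uf : 'I_K -> Z -> A -> Af -> R) (z : Z) (sigma : {ffun 'I_K -> Af})
  (x : {ffun A -> R}) : Prop :=
  mixed x /\ forall i, br rk a0 (uf i) z x = sigma i.

Definition approx_extreme_sets (K : nat) (rk : Af -> nat) (a0 : Af)
  (uf : 'I_K -> Z -> A -> Af -> R) (delta : R) (E : Z -> seq {ffun A -> R}) : Prop :=
  forall z (sigma : {ffun 'I_K -> Af}),
    (exists x, brregion rk a0 uf z sigma x) ->
    forall x, extreme_pt (closure (brregion rk a0 uf z sigma)) x ->
      (brregion rk a0 uf z sigma x /\ x \in E z) \/
      (exists2 x', x' \in E z & brregion rk a0 uf z sigma x' /\ dist1 x' x <= delta).

Definition pvec (K : nat) (F : {ffun 'I_K -> R}) (rk : Af -> nat) (a0 : Af)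
  (uf : 'I_K -> Z -> A -> Af -> R) z x : {ffun Af -> R} :=
  [ffun af => \sum_(i | br rk a0 (uf i) z x == af) F i].

Definition EU (K : nat) (F : {ffun 'I_K -> R}) (rk : Af -> nat) (a0 : Af)
  (u : Z -> A -> Af -> R) (uf : 'I_K -> Z -> A -> Af -> R) z x : R :=
  \sum_i F i * mutil u z x (br rk a0 (uf i) z x).

Definition estU (u : Z -> A -> Af -> R) z x (ph : {ffun Af -> R}) : R :=
  \sum_af mutil u z x af * ph af.

Definition TV (p q : {ffun Af -> R}) : R := 2^-1 * \sum_a `|p a - q a|.

End StackelbergDefs.

Definition Eiid (R : realFieldType) (K : nat) (F : {ffun 'I_K -> R}) (n : nat)
  (g : seq 'I_K -> R) : R :=
  \sum_(h : n.-tuple 'I_K) (\prod_(i <- h) F i) * g h.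

From HB Require Import structures.
From mathcomp Require Import all_boot all_order all_algebra.
From mathcomp Require Import lra.
Set Implicit Arguments. Unset Strict Implicit. Unset Printing Implicit Defensive.
Import Order.TTheory GRing.Theory Num.Theory.
Local Open Scope ring_scope.

(* The leader's commitment in round t depends only on f_1 .. f_(t-1) and f_t is
   a fresh draw, so the expected realised regret of round t is the expectation,
   over the history, of EU[pi^*] - EU[pi_t].  Split it as
   (EU[pi^*] - EU[pi^E]) + (EU[pi^E] - EU[pi_t]).  The first parts sum to at
   most 1 by the assumption on pi^E.  For the second, EU[x] is the estimated
   utility of x under the true response distribution p(z,x), and since
   utilities lie in [0,1], swapping p for p-hat moves it by at most 2 TV; as
   pi_t maximises the estimated utility over E_z, which contains pi^E(z), the
   second part is at most 2 (TV at pi^E + TV at pi_t). *)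

Section IidExpectation.
Variables (R : realFieldType) (K : nat) (F : {ffun 'I_K -> R}).

Lemma Eiid0 (g : seq 'I_K -> R) : Eiid F 0 g = g [::].
Proof.
rewrite /Eiid (big_pred1 [tuple]) ?big_nil ?mul1r // => h.
by apply/esym/eqP; rewrite (tuple0 h).
Qed.

Lemma EiidS n (g : seq 'I_K -> R) :
  Eiid F n.+1 g = \sum_i F i * Eiid F n (fun h => g (i :: h)).
Proof.
rewrite /Eiid (reindex (fun p : 'I_K * n.-tuple 'I_K => cons_tuple p.1 p.2)) /=.
  rewrite -(pair_bigA _ (fun i (h : n.-tuple 'I_K) =>
    \prod_(k <- i :: h) F k * g (i :: h))).
  apply: eq_bigr => i _; rewrite mulr_sumr; apply: eq_bigr => h _.
  by rewrite big_cons mulrA.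
apply: onW_bij; exists (fun h : n.+1.-tuple 'I_K => (thead h, behead_tuple h)).
  by case=> i h; congr pair; apply: val_inj.
by move=> h; rewrite [RHS](tuple_eta h).
Qed.

Lemma eq_Eiid n (f g : seq 'I_K -> R) :
  (forall h : n.-tuple 'I_K, f h = g h) -> Eiid F n f = Eiid F n g.
Proof. by move=> efg; apply: eq_bigr => h _; rewrite efg. Qed.

Lemma EiidD n (f g : seq 'I_K -> R) :
  Eiid F n (fun h => f h + g h) = Eiid F n f + Eiid F n g.
Proof. by rewrite /Eiid -big_split; apply: eq_bigr => h _; rewrite mulrDr. Qed.

Lemma EiidB n (f g : seq 'I_K -> R) :
  Eiid F n (fun h => f h - g h) = Eiid F n f - Eiid F n g.
Proof. by rewrite /Eiid -sumrB; apply: eq_bigr => h _; rewrite mulrBr. Qed.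

Lemma EiidZ n c (f : seq 'I_K -> R) :
  Eiid F n (fun h => c * f h) = c * Eiid F n f.
Proof. by rewrite /Eiid mulr_sumr; apply: eq_bigr => h _; rewrite mulrCA. Qed.

Lemma Eiid_sum n T (f : 'I_T -> seq 'I_K -> R) :
  Eiid F n (fun h => \sum_(t < T) f t h) = \sum_(t < T) Eiid F n (f t).
Proof. by rewrite /Eiid exchange_big; apply: eq_bigr => h _; rewrite mulr_sumr. Qed.

Lemma Eiid_cat m n (g : seq 'I_K -> R) :
  Eiid F (m + n) g = Eiid F m (fun h1 => Eiid F n (fun h2 => g (h1 ++ h2))).
Proof.
elim: m g => [|m IHm] g; first by rewrite Eiid0.
by rewrite addSn !EiidS; apply: eq_bigr => i _; rewrite IHm.
Qed.

Hypothesis F_ge0 : forall i, 0 <= F i.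

Lemma ler_Eiid n (f g : seq 'I_K -> R) :
  (forall h : n.-tuple 'I_K, f h <= g h) -> Eiid F n f <= Eiid F n g.
Proof.
move=> lefg; apply: ler_sum => h _.
by apply: ler_wpM2l; [apply: prodr_ge0 | apply: lefg].
Qed.

Hypothesis F_sum1 : \sum_i F i = 1.

Lemma Eiid_cst n c : Eiid F n (fun _ => c) = c.
Proof.
elim: n => [|n IHn]; first by rewrite Eiid0.
by rewrite EiidS; under eq_bigr do rewrite IHn; rewrite -mulr_suml F_sum1 mul1r.
Qed.

Lemma Eiid_take t n (g : seq 'I_K -> R) : (t <= n)%N ->
  Eiid F n (fun h => g (take t h)) = Eiid F t g.
Proof.
move=> /subnKC <-; rewrite Eiid_cat; apply: eq_Eiid => h1.
rewrite -[RHS](Eiid_cst (n - t)%N (g h1)).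
by apply: eq_Eiid => h2; rewrite take_size_cat ?size_tuple.
Qed.

Lemma Eiid_rcons t (g : seq 'I_K -> R) :
  Eiid F t.+1 g = Eiid F t (fun h => \sum_i F i * g (rcons h i)).
Proof.
rewrite -addn1 Eiid_cat; apply: eq_Eiid => h1.
by rewrite EiidS; apply: eq_bigr => i _; rewrite Eiid0 cats1.
Qed.

End IidExpectation.

Section LeaderUtility.
Variables (R : realFieldType) (Z : Type) (A Af : finType).
Variable u : Z -> A -> Af -> R.
Hypothesis u01 : forall z a b, 0 <= u z a b <= 1.

Lemma mutil_norm_le1 z x af : mixed x -> `|mutil u z x af| <= 1.
Proof.
case=> x_ge0 x_sum1; have u_ge0 al : 0 <= u z al af by case/andP: (u01 z al af).
rewrite ger0_norm; last by apply: sumr_ge0 => al _; apply: mulr_ge0.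
rewrite -x_sum1; apply: ler_sum => al _; rewrite -[leRHS]mulr1.
by apply: ler_wpM2l => //; case/andP: (u01 z al af).
Qed.

Lemma estU_TV (p q : {ffun Af -> R}) z x :
  mixed x -> `|estU u z x p - estU u z x q| <= 2 * TV p q.
Proof.
move=> mx; rewrite /TV mulrA mulfV ?pnatr_eq0 // mul1r /estU -sumrB.
apply: le_trans (ler_norm_sum _ _ _) _; apply: ler_sum => af _.
rewrite -mulrBr normrM -[leRHS]mul1r; apply: ler_wpM2r => //.
exact: mutil_norm_le1.
Qed.

Lemma estU_argmax_gap z x y (p q ph qh : {ffun Af -> R}) :
  mixed x -> mixed y -> estU u z x ph <= estU u z y qh ->
  estU u z x p - estU u z y q <= 2 * (TV p ph + TV q qh).
Proof.
move=> mx my le_est.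
have /ler_normlP[_ errx] := estU_TV p ph z mx.
have /ler_normlP[erry _] := estU_TV q qh z my.
lra.
Qed.

Variables (K : nat) (F : {ffun 'I_K -> R}) (rk : Af -> nat) (a0 : Af).
Variable uf : 'I_K -> Z -> A -> Af -> R.

Lemma EU_pvec z x : EU F rk a0 u uf z x = estU u z x (pvec F rk a0 uf z x).
Proof.
rewrite /EU /estU (partition_big (fun i => br rk a0 (uf i) z x) xpredT) //=.
apply: eq_bigr => af _; rewrite ffunE mulr_sumr.
by apply: eq_bigr => i /eqP <-; rewrite mulrC.
Qed.

Hypothesis F_sum1 : \sum_i F i = 1.

Lemma Eiid_round_utility (adv : seq 'I_K -> Z)
    (pi : seq 'I_K -> Z -> {ffun A -> R}) t n : (t < n)%N ->
  Eiid F n (fun h => let z := adv (take t h) in let x := pi (take t h) z in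
    mutil u z x (nth a0 [seq br rk a0 (uf i) z x | i <- h] t))
  = Eiid F t (fun h => EU F rk a0 u uf (adv h) (pi h (adv h))).
Proof.
move=> lt_tn; pose g h := let z := adv (take t h) in let x := pi (take t h) z in
  mutil u z x (nth a0 [seq br rk a0 (uf i) z x | i <- h] t).
transitivity (Eiid F n (fun h => g (take t.+1 h))).
  by apply: eq_Eiid => h; rewrite /g take_takel // map_take nth_take.
rewrite Eiid_take // Eiid_rcons; apply: eq_Eiid => h; rewrite /g /EU.
apply: eq_bigr => i _; rewrite -cats1 take_size_cat ?size_tuple //.
by rewrite map_cat nth_cat size_map size_tuple ltnn subnn.
Qed.

End LeaderUtility.

Theorem mainTheorem3
  (R : realFieldType) (Z : Type) (A Af : finType)
  (a0 : Af) (rk : Af -> nat) (rk_inj : injective rk)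
  (K T : nat) (hKT : (K <= T)%N)
  (u : Z -> A -> Af -> R) (hu : forall z a b, 0 <= u z a b <= 1)
  (uf : 'I_K -> Z -> A -> Af -> R) (huf : forall i z a b, 0 <= uf i z a b <= 1)
  (delta : R) (hdelta : delta <= T%:R^-1)
  (E : Z -> seq {ffun A -> R})
  (hEmixed : forall z x, x \in E z -> mixed x)
  (hE : approx_extreme_sets rk a0 uf delta E)
  (F : {ffun 'I_K -> R}) (hF : distrib F)
  (* adaptive adversary: z_t chosen from the history f_1..f_{t-1} *)
  (adv : seq 'I_K -> Z)
  (* arbitrary estimation procedure: phat_t(z,x) computed from f_1..f_{t-1} *)
  (phat : seq 'I_K -> Z -> {ffun A -> R} -> {ffun Af -> R})
  (hphat : forall h z x, distrib (phat h z x))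
  (* the algorithm's policy pi_t, computed from f_1..f_{t-1} *)
  (pol : seq 'I_K -> Z -> {ffun A -> R})
  (hpolE : forall h z, pol h z \in E z)
  (hpolmax : forall h z x, x \in E z ->
     estU u z x (phat h z x) <= estU u z (pol h z) (phat h z (pol h z)))
  (* optimal policy pi^* *)
  (pistar : Z -> {ffun A -> R}) (hpistar : forall z, mixed (pistar z))
  (hpistar_opt : forall (h : T.-tuple 'I_K) (t : 'I_T) x, mixed x ->
     EU F rk a0 u uf (adv (take t h)) x
       <= EU F rk a0 u uf (adv (take t h)) (pistar (adv (take t h))))
  (* the policy pi^(E) *)
  (piE : Z -> {ffun A -> R}) (hpiE : forall z, piE z \in E z)
  (hpiE_bound : forall h : T.-tuple 'I_K,
     \sum_(t < T)
       (EU F rk a0 u uf (adv (take t h)) (pistar (adv (take t h)))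
        - EU F rk a0 u uf (adv (take t h)) (piE (adv (take t h)))) <= 1) :
  Eiid F T (fun h =>
    \sum_(t < T)
      (let z := adv (take t h) in
       let f := nth a0 [seq br rk a0 (uf i) z (pistar z) | i <- h] t in
       let g := nth a0 [seq br rk a0 (uf i) z (pol (take t h) z) | i <- h] t in
       mutil u z (pistar z) f - mutil u z (pol (take t h) z) g))
  <= 1 + 2 * \sum_(t < T) Eiid F t (fun h =>
        let z := adv h in
        TV (pvec F rk a0 uf z (piE z)) (phat h z (piE z))
        + TV (pvec F rk a0 uf z (pol h z)) (phat h z (pol h z))).
Proof.
have [F_ge0 F_sum1] := hF.
pose regret_piE h :=
  let z := adv h in EU F rk a0 u uf z (pistar z) - EU F rk a0 u uf z (piE z).
have regret_piE_le1 : \sum_(t < T) Eiid F t regret_piE <= 1.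
  under eq_bigr => t _ do
    rewrite -(Eiid_take F_sum1 regret_piE (ltnW (ltn_ord t))).
  rewrite -Eiid_sum -[leRHS](Eiid_cst F_sum1 T 1).
  by apply: ler_Eiid => // h; apply: hpiE_bound.
rewrite Eiid_sum; apply: le_trans (lerD regret_piE_le1 (lexx _)).
rewrite mulr_sumr -big_split /=; apply: ler_sum => t _.
rewrite (_ : Eiid F T _ = Eiid F t (fun h => let z := adv h in
    EU F rk a0 u uf z (pistar z) - EU F rk a0 u uf z (pol h z))); last first.
  rewrite EiidB.
  have /= -> := Eiid_round_utility u rk a0 uf F_sum1 adv (fun=> pistar) (ltn_ord t).
  have /= -> := Eiid_round_utility u rk a0 uf F_sum1 adv pol (ltn_ord t).
  by rewrite -EiidB.
rewrite -EiidZ -EiidD; apply: ler_Eiid => // h /=.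
rewrite /regret_piE /= !EU_pvec.
have := estU_argmax_gap hu (pvec F rk a0 uf (adv h) (piE (adv h)))
  (pvec F rk a0 uf (adv h) (pol h (adv h)))
  (hEmixed _ _ (hpiE _)) (hEmixed _ _ (hpolE h _)) (hpolmax h (adv h) _ (hpiE _)).
lra.
Qed.
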